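(* Let $\phi_1,\dots,\phi_n,\delta$ ($n\ge1$) be distinct variables, let $c_1,\dots,c_n\in[0,1]$ and $d=\mathrm{avg}(c_1,\dots,c_n)$. Let $\mathcal T$ be the theory consisting of $\phi_1,\dots,\phi_n\Rightarrow_1\delta$, $\ \sim\phi_1,\dots,\sim\phi_n\Rightarrow_1\sim\delta$, and, for $i=1,\dots,n$, $\phi_i\Rightarrow_{1-c_i}\bot$ and $\top\Rightarrow_{c_i}\phi_i$. Then $\mathcal T\vdash_{\mathsf{LGIM}}\top\Rightarrow_d\delta$ and $\mathcal T\vdash_{\mathsf{LGIM}}\delta\Rightarrow_{1-d}\bot$.
   Context: Fix a continuous t-norm $\odot$ on $[0,1]$ and let $c\oplus d = 1-((1-c)\odot(1-d))$. Write $c\odot_{\L} d=\max(c+d-1,0)$, $c\oplus_{\L} d=\min(c+d,1)$, and $\mathrm{avg}(r_1,\dots,r_n)=(r_1+\dots+r_n)/n$. Basic expressions: built from countably many variables $\phi_0,\phi_1,\dots$ and constants $\bot,\top$ by binary $\land,\lor,\odot$ and unary $\sim$. A generalised graded implication is written $\alpha_1,\dots,\alpha_n\Rightarrow_c\beta$ where $n\ge1$, $\alpha_1,\dots,\alpha_n$ is a multiset of basic expressions, $\beta$ a basic expression, $c\in[0,1]$; for $n=1$ it is a graded implication $\alpha\Rightarrow_c\beta$. Formulas of $\mathsf{LGIM}$ are built from generalised graded implications by classical $\land,\lor,\lnot$; $\Phi\to\Psi$ abbreviates $\lnot\Phi\lor\Psi$. A theory is a set of formulas. Calculus $\mathsf{LGIM}$: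 axioms are (i) all substitution instances (by generalised graded implications) of classical propositional tautologies; (ii) for all basic expressions $\alpha,\beta,\gamma$ and $c,d\in[0,1]$: ($\land_1$) $(\alpha\Rightarrow_d\beta)\land(\alpha\Rightarrow_d\gamma)\to(\alpha\Rightarrow_d\beta\land\gamma)$; ($\land_2$) $\alpha\land\beta\Rightarrow_1\alpha$; ($\land_3$) $\alpha\land\beta\Rightarrow_1\beta$; ($\lor_1$) $(\alpha\Rightarrow_d\gamma)\land(\beta\Rightarrow_d\gamma)\to(\alpha\lor\beta\Rightarrow_d\gamma)$; ($\lor_2$) $\alpha\Rightarrow_1\alpha\lor\beta$; ($\lor_3$) $\beta\Rightarrow_1\alpha\lor\beta$; ($\odot_1$) $(\top\Rightarrow_c\alpha)\land(\top\Rightarrow_d\beta)\to(\top\Rightarrow_{c\odot d}\alpha\odot\beta)$; ($\odot_2$) $(\alpha\Rightarrow_c\bot)\land(\beta\Rightarrow_d\bot)\to(\alpha\odot\beta\Rightarrow_{c\oplus d}\bot)$; ($\odot_3$) $\top\Rightarrow_1\top\odot\top$; ($\sim_1$) $(\alpha\Rightarrow_d\beta)\to(\sim\beta\Rightarrow_d\sim\alpha)$; ($\sim_2$) $\sim\sim\alpha\Rightarrow_1\alpha$; ($\sim_3$) $\alpha\Rightarrow_1\sim\sim\alpha$; ($\top$) $\alpha\Rightarrow_1\top$; ($\bot$) $\bot\Rightarrow_1\alpha$; (0) $\alpha\Rightarrow_0\beta$; ($c$) $\alpha\Rightarrow_c\alpha$; (inkons) $\lnot(\top\Rightarrow_c\bot)$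 for $c>0$; (trans$_1$) $(\alpha\Rightarrow_c\beta)\land(\beta\Rightarrow_d\gamma)\to(\alpha\Rightarrow_{c\odot_{\L}d}\gamma)$; (trans$_2$) $(\alpha\Rightarrow_c\bot)\land(\top\Rightarrow_d\beta)\to(\alpha\Rightarrow_{c\oplus_{\L}d}\beta)$; (lin$_1$) $(\alpha\Rightarrow_1\beta)\lor(\beta\Rightarrow_1\alpha)$; (lin$_2$) $(\top\Rightarrow_d\alpha)\lor(\alpha\Rightarrow_{1-d}\bot)$; (iii) for all basic expressions $\alpha,\alpha_i,\beta_i,\beta,\gamma$ and $c,c_i,d\in[0,1]$: (trans$\varnothing_1$) $(\alpha_1\Rightarrow_{c_1}\beta_1)\land\dots\land(\alpha_n\Rightarrow_{c_n}\beta_n)\land(\beta_1,\dots,\beta_n\Rightarrow_d\gamma)\to(\alpha_1,\dots,\alpha_n\Rightarrow_{\mathrm{avg}(c_1,\dots,c_n)\odot_{\L}d}\gamma)$; (trans$\varnothing_2$) $(\alpha_1,\dots,\alpha_n\Rightarrow_c\beta)\land(\beta\Rightarrow_d\gamma)\to(\alpha_1,\dots,\alpha_n\Rightarrow_{c\odot_{\L}d}\gamma)$; (trans$\varnothing_3$) $(\alpha_1\Rightarrow_{c_1}\bot)\land\dots\land(\alpha_n\Rightarrow_{c_n}\bot)\land(\top\Rightarrow_d\beta)\to(\alpha_1,\dots,\alpha_n\Rightarrow_{\mathrm{avg}(c_1,\dots,c_n)\oplus_{\L}d}\beta)$; ($\top\varnothing$) $(\top,\dots,\top\Rightarrow_c\alpha)\to(\top\Rightarrow_c\alpha)$.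 The only rule is modus ponens. $\mathcal T\vdash_{\mathsf{LGIM}}\Phi$ means $\Phi$ has a finite derivation from axioms and elements of $\mathcal T$ by modus ponens. *)

From Stdlib Require Import Reals List Permutation.
Import ListNotations.
Open Scope R_scope.

Inductive bexpr : Type :=
| BVar (k : nat)
| BBot
| BTop
| BAnd (a b : bexpr)
| BOr (a b : bexpr)
| BOdot (a b : bexpr)
| BNeg (a : bexpr).

(** Generalised graded implication  alpha_1,...,alpha_n =>_c beta
    (antecedent multiset represented by a list; see fequiv below). *)
Record ggi : Type := GGI { ante : list bexpr ; grade : R ; concl : bexpr }.

Inductive formula : Type :=
| FAtom (g : ggi)
| FAnd (f g : formula)
| FOr (f g : formula)
| FNot (f : formula).

Definition FImp (f g : formula) : formula := FOr (FNot f) g.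

Definition gi (a : bexpr) (c : R) (b : bexpr) : formula := FAtom (GGI [a] c b).

Definition unit_iv (x : R) : Prop := 0 <= x <= 1.

Fixpoint formula_ok (f : formula) : Prop :=
  match f with
  | FAtom g => ante g <> [] /\ unit_iv (grade g)
  | FAnd f1 f2 => formula_ok f1 /\ formula_ok f2
  | FOr f1 f2 => formula_ok f1 /\ formula_ok f2
  | FNot f1 => formula_ok f1
  end.

Fixpoint evalF (v : ggi -> bool) (f : formula) : bool :=
  match f with
  | FAtom g => v g
  | FAnd f1 f2 => andb (evalF v f1) (evalF v f2)
  | FOr f1 f2 => orb (evalF v f1) (evalF v f2)
  | FNot f1 => negb (evalF v f1)
  end.

(** identity of formulas with antecedents read as multisets *)
Inductive fequiv : formula -> formula -> Prop :=
| fe_atom l l' c b : Permutation l l' -> fequiv (FAtom (GGI l c b)) (FAtom (GGI l' c b))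
| fe_and f1 f2 g1 g2 : fequiv f1 g1 -> fequiv f2 g2 -> fequiv (FAnd f1 f2) (FAnd g1 g2)
| fe_or f1 f2 g1 g2 : fequiv f1 g1 -> fequiv f2 g2 -> fequiv (FOr f1 f2) (FOr g1 g2)
| fe_not f1 g1 : fequiv f1 g1 -> fequiv (FNot f1) (FNot g1).

Definition is_cont_tnorm (t : R -> R -> R) : Prop :=
  (forall x y, unit_iv x -> unit_iv y -> unit_iv (t x y)) /\
  (forall x y, unit_iv x -> unit_iv y -> t x y = t y x) /\
  (forall x y z, unit_iv x -> unit_iv y -> unit_iv z -> t x (t y z) = t (t x y) z) /\
  (forall x x' y y', unit_iv x -> unit_iv x' -> unit_iv y -> unit_iv y' ->
      x <= x' -> y <= y' -> t x y <= t x' y') /\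
  (forall x, unit_iv x -> t x 1 = x) /\
  (forall x y, unit_iv x -> unit_iv y -> forall eps, eps > 0 ->
     exists del, del > 0 /\ forall x' y', unit_iv x' -> unit_iv y' ->
       Rabs (x' - x) < del -> Rabs (y' - y) < del -> Rabs (t x' y' - t x y) < eps).

Definition conorm (t : R -> R -> R) (c d : R) : R := 1 - t (1 - c) (1 - d).
Definition luk_t (c d : R) : R := Rmax (c + d - 1) 0.
Definition luk_s (c d : R) : R := Rmin (c + d) 1.
Definition avg (l : list R) : R := fold_right Rplus 0 l / INR (length l).

Inductive LAxiom (t : R -> R -> R) : formula -> Prop :=
| ax_taut f : formula_ok f -> (forall v, evalF v f = true) -> LAxiom t f
| ax_and1 a b g d : unit_iv d ->
    LAxiom t (FImp (FAnd (gi a d b) (gi a d g)) (gi a d (BAnd b g)))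
| ax_and2 a b : LAxiom t (gi (BAnd a b) 1 a)
| ax_and3 a b : LAxiom t (gi (BAnd a b) 1 b)
| ax_or1 a b g d : unit_iv d ->
    LAxiom t (FImp (FAnd (gi a d g) (gi b d g)) (gi (BOr a b) d g))
| ax_or2 a b : LAxiom t (gi a 1 (BOr a b))
| ax_or3 a b : LAxiom t (gi b 1 (BOr a b))
| ax_odot1 a b c d : unit_iv c -> unit_iv d ->
    LAxiom t (FImp (FAnd (gi BTop c a) (gi BTop d b)) (gi BTop (t c d) (BOdot a b)))
| ax_odot2 a b c d : unit_iv c -> unit_iv d ->
    LAxiom t (FImp (FAnd (gi a c BBot) (gi b d BBot)) (gi (BOdot a b) (conorm t c d) BBot))
| ax_odot3 : LAxiom t (gi BTop 1 (BOdot BTop BTop))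
| ax_neg1 a b d : unit_iv d -> LAxiom t (FImp (gi a d b) (gi (BNeg b) d (BNeg a)))
| ax_neg2 a : LAxiom t (gi (BNeg (BNeg a)) 1 a)
| ax_neg3 a : LAxiom t (gi a 1 (BNeg (BNeg a)))
| ax_top a : LAxiom t (gi a 1 BTop)
| ax_bot a : LAxiom t (gi BBot 1 a)
| ax_zero a b : LAxiom t (gi a 0 b)
| ax_refl a c : unit_iv c -> LAxiom t (gi a c a)
| ax_inkons c : 0 < c <= 1 -> LAxiom t (FNot (gi BTop c BBot))
| ax_trans1 a b g c d : unit_iv c -> unit_iv d ->
    LAxiom t (FImp (FAnd (gi a c b) (gi b d g)) (gi a (luk_t c d) g))
| ax_trans2 a b c d : unit_iv c -> unit_iv d ->
    LAxiom t (FImp (FAnd (gi a c BBot) (gi BTop d b)) (gi a (luk_s c d) b))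
| ax_lin1 a b : LAxiom t (FOr (gi a 1 b) (gi b 1 a))
| ax_lin2 a d : unit_iv d -> LAxiom t (FOr (gi BTop d a) (gi a (1 - d) BBot))
(* l lists the triples (alpha_i, c_i, beta_i) *)
| ax_transE1 (l : list (bexpr * R * bexpr)) d g :
    l <> [] -> Forall (fun x => unit_iv (snd (fst x))) l -> unit_iv d ->
    LAxiom t (FImp
      (fold_right FAnd (FAtom (GGI (map snd l) d g))
         (map (fun x => gi (fst (fst x)) (snd (fst x)) (snd x)) l))
      (FAtom (GGI (map (fun x => fst (fst x)) l)
                  (luk_t (avg (map (fun x => snd (fst x)) l)) d) g)))
| ax_transE2 (l : list bexpr) b g c d :
    l <> [] -> unit_iv c -> unit_iv d ->
    LAxiom t (FImp (FAnd (FAtom (GGI l c b)) (gi b d g)) (FAtom (GGI l (luk_t c d) g)))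
(* l lists the pairs (alpha_i, c_i) *)
| ax_transE3 (l : list (bexpr * R)) b d :
    l <> [] -> Forall (fun x => unit_iv (snd x)) l -> unit_iv d ->
    LAxiom t (FImp
      (fold_right FAnd (gi BTop d b) (map (fun x => gi (fst x) (snd x) BBot) l))
      (FAtom (GGI (map fst l) (luk_s (avg (map snd l)) d) b)))
| ax_topE (n : nat) c a : (1 <= n)%nat -> unit_iv c ->
    LAxiom t (FImp (FAtom (GGI (repeat BTop n) c a)) (gi BTop c a)).

Inductive Derivable (t : R -> R -> R) (T : formula -> Prop) : formula -> Prop :=
| d_theory f : T f -> Derivable t T f
| d_axiom f : LAxiom t f -> Derivable t T f
| d_mp f g : Derivable t T f -> Derivable t T (FImp f g) -> Derivable t T g
| d_equiv f g : Derivable t T f -> fequiv f g -> Derivable t T g.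

(* The first claim is one application of (trans∅1) to the premises [⊤ =>_{c_i} φ_i] and
   [φ_1,...,φ_n =>_1 δ], which yields [⊤,...,⊤ =>_d δ], followed by (⊤∅).  For the second,
   contraposition turns [φ_i =>_{1-c_i} ⊥] into [⊤ =>_{1-c_i} ∼φ_i]; the same argument with
   [∼φ_1,...,∼φ_n =>_1 ∼δ] gives [⊤ =>_{1-d} ∼δ], since the average of the [1 - c_i] is [1 - d],
   and contraposing once more gives [δ =>_{1-d} ⊥]. *)

From Stdlib Require Import Reals List Lra Lia.
Import ListNotations.
Open Scope R_scope.

Lemma unit_iv_1 : unit_iv 1.
Proof. unfold unit_iv; lra. Qed.

Lemma unit_iv_compl x : unit_iv x -> unit_iv (1 - x).
Proof. unfold unit_iv; lra. Qed.

Lemma luk_t_1l x : unit_iv x -> luk_t 1 x = x.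
Proof. unfold luk_t, unit_iv, Rmax; intros; destruct Rle_dec; lra. Qed.

Lemma luk_t_1r x : unit_iv x -> luk_t x 1 = x.
Proof. unfold luk_t, unit_iv, Rmax; intros; destruct Rle_dec; lra. Qed.

Lemma length_pos {A} (l : list A) : l <> [] -> 0 < INR (length l).
Proof.
  destruct l as [|a l]; [easy|]; intros _.
  simpl length; rewrite S_INR; pose proof (pos_INR (length l)); lra.
Qed.

Lemma sum_unit_bounds l : Forall unit_iv l -> 0 <= fold_right Rplus 0 l <= INR (length l).
Proof.
  induction 1 as [|x l Hx _ IH]; simpl length; simpl fold_right; [simpl; lra|].
  rewrite S_INR; unfold unit_iv in Hx; lra.
Qed.

Lemma avg_unit l : l <> [] -> Forall unit_iv l -> unit_iv (avg l).
Proof.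
  intros Hne Hl; pose proof (sum_unit_bounds l Hl); pose proof (length_pos l Hne).
  unfold avg, unit_iv, Rdiv; split.
  - apply Rmult_le_pos; [lra|]. left; apply Rinv_0_lt_compat; lra.
  - apply (Rmult_le_reg_r (INR (length l))); [lra|].
    rewrite Rmult_assoc, Rinv_l by lra; lra.
Qed.

Lemma avg_map_unit (c : nat -> R) s :
  s <> [] -> (forall i, In i s -> unit_iv (c i)) -> unit_iv (avg (map c s)).
Proof.
  intros Hs Hc; apply avg_unit; [destruct s; easy|].
  apply Forall_forall; intros x Hx; apply in_map_iff in Hx as [i [<- Hi]]; auto.
Qed.

Lemma sum_compl (c : nat -> R) s :
  fold_right Rplus 0 (map (fun i => 1 - c i) s)
  = INR (length s) - fold_right Rplus 0 (map c s).
Proof.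
  induction s as [|i s IH]; simpl length; simpl fold_right; [simpl; lra|].
  rewrite S_INR, IH; lra.
Qed.

Lemma avg_compl (c : nat -> R) s : s <> [] ->
  avg (map (fun i => 1 - c i) s) = 1 - avg (map c s).
Proof.
  intros Hne; pose proof (length_pos s Hne).
  unfold avg; rewrite !length_map, sum_compl; field; lra.
Qed.

Lemma gi_ok a c b : unit_iv c -> formula_ok (gi a c b).
Proof. now split. Qed.

Section DerivedRules.

Variable t : R -> R -> R.
Variable T : formula -> Prop.
Notation D := (Derivable t T).

Lemma derivable_and f g : D f -> D g -> formula_ok f -> formula_ok g -> D (FAnd f g).
Proof.
  intros Hf Hg Of Og.
  assert (Htaut : D (FImp f (FImp g (FAnd f g)))).
  { apply d_axiom, ax_taut; [simpl; tauto|].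
    intro v; simpl; destruct (evalF v f), (evalF v g); reflexivity. }
  apply d_mp with g; [exact Hg|]. now apply d_mp with f.
Qed.

Lemma derivable_fold_and base fs :
  D base -> formula_ok base -> Forall (fun f => D f /\ formula_ok f) fs ->
  D (fold_right FAnd base fs) /\ formula_ok (fold_right FAnd base fs).
Proof.
  intros Hb Ob Hfs; induction Hfs as [|f fs [Hf Of] _ [IH Ok]]; simpl; [easy|].
  split; [apply derivable_and|]; auto.
Qed.

Lemma derivable_trans a b g c d :
  unit_iv c -> unit_iv d -> D (gi a c b) -> D (gi b d g) -> D (gi a (luk_t c d) g).
Proof.
  intros Hc Hd Hab Hbg.
  apply d_mp with (FAnd (gi a c b) (gi b d g)).
  - apply derivable_and; auto using gi_ok.
  - now apply d_axiom, ax_trans1.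
Qed.

Lemma derivable_trans_1l a b g d : unit_iv d -> D (gi a 1 b) -> D (gi b d g) -> D (gi a d g).
Proof.
  intros Hd Hab Hbg; rewrite <- (luk_t_1l d Hd).
  apply derivable_trans with b; auto using unit_iv_1.
Qed.

Lemma derivable_trans_1r a b g d : unit_iv d -> D (gi a d b) -> D (gi b 1 g) -> D (gi a d g).
Proof.
  intros Hd Hab Hbg; rewrite <- (luk_t_1r d Hd).
  apply derivable_trans with b; auto using unit_iv_1.
Qed.

Lemma derivable_contra a b d : unit_iv d -> D (gi a d b) -> D (gi (BNeg b) d (BNeg a)).
Proof. intros Hd Hab; apply d_mp with (gi a d b); [exact Hab|]. now apply d_axiom, ax_neg1. Qed.

Lemma derivable_top_neg_of_bot a d : unit_iv d -> D (gi a d BBot) -> D (gi BTop d (BNeg a)).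
Proof.
  intros Hd Ha.
  apply derivable_trans_1l with (BNeg BBot); [exact Hd| |now apply derivable_contra].
  apply derivable_trans_1l with (BNeg (BNeg BTop)); [exact unit_iv_1|apply d_axiom, ax_neg3|].
  apply derivable_contra; [exact unit_iv_1|apply d_axiom, ax_bot].
Qed.

Lemma derivable_bot_of_top_neg a d : unit_iv d -> D (gi BTop d (BNeg a)) -> D (gi a d BBot).
Proof.
  intros Hd Ha.
  apply derivable_trans_1r with (BNeg BTop); [exact Hd| |].
  - apply derivable_trans_1l with (BNeg (BNeg a)); [exact Hd|apply d_axiom, ax_neg3|].
    now apply derivable_contra.
  - apply derivable_trans_1l with (BNeg (BNeg BBot)); [exact unit_iv_1| |apply d_axiom, ax_neg2].
    apply derivable_contra; [exact unit_iv_1|apply d_axiom, ax_top].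
Qed.

Lemma derivable_top_avg (s : list nat) (b : nat -> bexpr) (c : nat -> R) g :
  s <> [] -> (forall i, In i s -> unit_iv (c i)) ->
  (forall i, In i s -> D (gi BTop (c i) (b i))) ->
  D (FAtom (GGI (map b s) 1 g)) ->
  D (gi BTop (avg (map c s)) g).
Proof.
  intros Hs Hc Hb Hg.
  set (l := map (fun i => (BTop, c i, b i)) s).
  assert (Hl : l <> []) by (unfold l; destruct s; easy).
  assert (Hlc : Forall (fun x => unit_iv (snd (fst x))) l).
  { apply Forall_forall; intros x Hx; apply in_map_iff in Hx as [i [<- Hi]]; now apply Hc. }
  assert (Havg : unit_iv (avg (map c s))) by now apply avg_map_unit.
  pose proof (ax_transE1 t l 1 g Hl Hlc unit_iv_1) as Hax.
  unfold l in Hax; rewrite !map_map in Hax; simpl in Hax.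
  rewrite map_const, luk_t_1r in Hax by exact Havg.
  apply d_mp with (FAtom (GGI (repeat BTop (length s)) (avg (map c s)) g)).
  - apply d_mp with (2 := d_axiom _ _ _ Hax).
    apply derivable_fold_and; [exact Hg|split; [destruct s; easy|exact unit_iv_1]|].
    apply Forall_forall; intros x Hx; apply in_map_iff in Hx as [i [<- Hi]]; auto using gi_ok.
  - apply d_axiom, ax_topE; [destruct s; simpl; [easy|lia]|exact Havg].
Qed.

End DerivedRules.

Theorem mainTheorem10 (t : R -> R -> R) (n : nat) (p : nat -> nat) (q : nat)
  (c : nat -> R) :
  is_cont_tnorm t ->
  (1 <= n)%nat ->
  (forall i j, (i < n)%nat -> (j < n)%nat -> p i = p j -> i = j) ->
  (forall i, (i < n)%nat -> p i <> q) ->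
  (forall i, (i < n)%nat -> 0 <= c i <= 1) ->
  let phis := map (fun i => BVar (p i)) (seq 0 n) in
  let d := avg (map c (seq 0 n)) in
  let T := fun f : formula =>
    f = FAtom (GGI phis 1 (BVar q)) \/
    f = FAtom (GGI (map BNeg phis) 1 (BNeg (BVar q))) \/
    (exists i, (i < n)%nat /\
       (f = gi (BVar (p i)) (1 - c i) BBot \/ f = gi BTop (c i) (BVar (p i)))) in
  Derivable t T (gi BTop d (BVar q)) /\ Derivable t T (gi (BVar q) (1 - d) BBot).
Proof.
  (* Neither the t-norm nor the distinctness of the variables plays a role. *)
  intros _ Hn _ _ Hc phis d T.
  assert (Hs : seq 0 n <> []) by (destruct n; [lia|discriminate]).
  assert (Hci : forall i, In i (seq 0 n) -> unit_iv (c i)).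
  { intros i Hi; apply in_seq in Hi; apply Hc; lia. }
  assert (Hd : unit_iv d) by now apply avg_map_unit.
  split.
  - apply derivable_top_avg with (b := fun i => BVar (p i)); auto.
    + intros i Hi; apply d_theory; right; right.
      exists i; apply in_seq in Hi; split; [lia|now right].
    + now apply d_theory; left.
  - apply derivable_bot_of_top_neg; [now apply unit_iv_compl|].
    unfold d; rewrite <- avg_compl by exact Hs.
    apply derivable_top_avg with (b := fun i => BNeg (BVar (p i)));
      auto using unit_iv_compl.
    + intros i Hi; apply derivable_top_neg_of_bot; auto using unit_iv_compl.
      apply d_theory; right; right.
      exists i; apply in_seq in Hi; split; [lia|now left].
    + apply d_theory; right; left; unfold phis; now rewrite map_map.
Qed.
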